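(* Let $G$ be a finite metric graph and let $\lambda > 0$. Let $G_\lambda$ be the subgraph of $G$ consisting of all edges $e$ whose length $L(e)$ is a natural multiple of $\pi/\sqrt{\lambda}$ (together with their incident vertices). Then $$\dim R(G,\lambda) = \beta_1(G_\lambda) - \beta_0^{\rm odd}(G_\lambda).$$ In particular, $\lambda$ is a resonance of $G$ if and only if $\beta_1(G_\lambda) - \beta_0^{\rm odd}(G_\lambda) \neq 0$.
   Context: A finite metric graph $G$ has finite vertex set $V$ and finite edge set $E$ (loops and multiple edges allowed) with a length function $L:E\to(0,\infty)$; each edge $e$ is identified with the interval $[0,L(e)]$, its endpoints $0$ and $L(e)$ being identified with the vertices $o(e)$ and $t(e)$ to which $e$ is incident. For $f\in L^2(G)$, $f_e$ denotes the restriction to $e$, viewed as a function on $[0,L(e)]$. $H^1(G)$ is the set of $f$ with $f_e\in H^1(0,L(e))$ for all $e$ which are continuous at every vertex (the limits of $f_e$ at a vertex $v$ coincide for all edges $e$ incident to $v$; this common value is $f(v)$); $\widetilde H^2(G)$ is the set of $f$ with $f_e \in H^2(0,L(e))$ for all $e$. For such $f$, $\partial_\nu f(v)=\sum_{t(e)=v} f_e'(L(e)) - \sum_{o(e)=v} f_e'(0)$. The Kirchhoff Laplacian $-\Delta_G$ in $L^2(G)$ acts as $(-\Delta_G f)_e=-f_e''$ on the domain $\{f\in H^1(G)\cap\widetilde H^2(G): \partial_\nu f(v)=0 \text{ for all } v\in V\}$; it is self-adjoint with discrete nonnegative spectrum. For $\lambda>0$, the resonance eigenspace is $R(G,\lambda)=\{f\in\ker(-\Delta_G-\lambda):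 f(v)=0 \text{ for all } v\in V\}$, and $\lambda$ is called a (real) resonance of $G$ if $R(G,\lambda)\neq\{0\}$. For a finite graph $H$, $\beta_0(H)$ is its number of connected components and $\beta_1(H)=|E(H)|-|V(H)|+\beta_0(H)$ is its first Betti number. A cycle is said to have odd length with respect to $x>0$ if its total length is an odd multiple of $x$. $\beta_0^{\rm odd}(G_\lambda)$ denotes the number of connected components of $G_\lambda$ which contain a cycle with odd length with respect to $\pi/\sqrt{\lambda}$. *)

From Stdlib Require Import Reals ClassicalEpsilon.
From mathcomp Require Import all_boot.

Set Implicit Arguments.
Unset Strict Implicit.
Unset Printing Implicit Defensive.

Definition pbool (P : Prop) : bool :=
  if excluded_middle_informative P then true else false.

(* A finite metric graph: vertices 'I_nV, edges 'I_nE (loops and multiple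
   edges allowed), origin/terminus maps, positive lengths. Edge e is
   identified with [0, len e], 0 ~ src e, len e ~ tgt e. *)
Record mgraph := MGraph {
  nV : nat;
  nE : nat;
  src : 'I_nE -> 'I_nV;
  tgt : 'I_nE -> 'I_nV;
  len : 'I_nE -> R;
  len_pos : forall e, Rlt 0 (len e)
}.
Arguments src : clear implicits.
Arguments tgt : clear implicits.
Arguments len : clear implicits.

Unset Implicit Arguments.
Section MG.
Variable G : mgraph.
Local Open Scope R_scope.

Definition edge_int (e : 'I_(nE G)) (x : R) : Prop := 0 < x < len G e.

Definition gfun := 'I_(nE G) -> R -> R.

(* R(G, lam): f in ker(-Delta_G - lam) vanishing at all vertices.
   On each edge f_e solves -f_e'' = lam f_e on (0,L(e)) (with derivative g_e);
   the boundary values of f_e (trace, = f(v)) are 0 at both endpoints, and the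
   boundary values d0 e = f_e'(0), dL e = f_e'(L(e)) exist and satisfy the
   Kirchhoff condition partial_nu f (v) = 0 at every vertex v. *)
Definition Rspace (lam : R) (f : gfun) : Prop :=
  exists (g : gfun) (d0 dL : 'I_(nE G) -> R),
    (forall e x, edge_int e x ->
        derivable_pt_lim (f e) x (g e x) /\
        derivable_pt_lim (g e) x (- lam * f e x)) /\
    (forall e, limit1_in (f e) (edge_int e) 0 0 /\
               limit1_in (f e) (edge_int e) 0 (len G e) /\
               limit1_in (g e) (edge_int e) (d0 e) 0 /\
               limit1_in (g e) (edge_int e) (dL e) (len G e)) /\
    (forall v : 'I_(nV G),
        \big[Rplus/0]_(e | tgt G e == v) dL e
        - \big[Rplus/0]_(e | src G e == v) d0 e = 0).

(* S (a linear space of functions on G, elements identified when equal a.e.,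
   i.e. on the open edges) has dimension d: it has a basis of d elements. *)
Definition has_dim (S : gfun -> Prop) (d : nat) : Prop :=
  exists b : 'I_d -> gfun,
    (forall i, S (b i)) /\
    (forall c : 'I_d -> R,
        (forall e x, edge_int e x -> \big[Rplus/0]_i (c i * b i e x) = 0) ->
        forall i, c i = 0) /\
    (forall f, S f -> exists c : 'I_d -> R,
        forall e x, edge_int e x -> f e x = \big[Rplus/0]_i (c i * b i e x)).

Definition is_resonance (lam : R) : Prop :=
  exists f, Rspace lam f /\ exists e x, edge_int e x /\ f e x <> 0.

Definition unit_len (lam : R) : R := PI / sqrt lam.

Definition inGl (lam : R) (e : 'I_(nE G)) : bool :=
  pbool (exists k : nat, len G e = INR k * unit_len lam).

Definition Vl (lam : R) : {set 'I_(nV G)} :=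
  [set v | [exists e, inGl lam e && ((src G e == v) || (tgt G e == v))]].

Definition El (lam : R) : {set 'I_(nE G)} := [set e | inGl lam e].

Definition adjl (lam : R) : rel 'I_(nV G) :=
  fun u v => [exists e, inGl lam e &&
     (((src G e == u) && (tgt G e == v)) || ((src G e == v) && (tgt G e == u)))].

Definition comps (lam : R) : {set {set 'I_(nV G)}} :=
  [set [set w | connect (adjl lam) v w] | v in Vl lam].

Definition beta0 (lam : R) : nat := #|comps lam|.

(* beta1 = |E| - |V| + beta0 (computed as (|E| + beta0) - |V|, which is
   nonnegative, so the truncated subtraction is exact) *)
Definition beta1 (lam : R) : nat := (#|El lam| + beta0 lam - #|Vl lam|)%N.

(* Cycles: a dart is an oriented edge (e, true) from src to tgt, (e,false)
   from tgt to src. *)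
Definition dstart (d : 'I_(nE G) * bool) : 'I_(nV G) :=
  if d.2 then src G d.1 else tgt G d.1.
Definition dend (d : 'I_(nE G) * bool) : 'I_(nV G) :=
  if d.2 then tgt G d.1 else src G d.1.

Definition is_cycle (lam : R) (p : seq ('I_(nE G) * bool)) : Prop :=
  p <> [::] /\
  all (fun d => inGl lam d.1) p /\
  uniq (map fst p) /\
  uniq (map dstart p) /\
  cycle (fun d1 d2 => dend d1 == dstart d2) p.

Definition cycle_len (p : seq ('I_(nE G) * bool)) : R :=
  \big[Rplus/0]_(d <- p) len G d.1.

Definition odd_wrt (x l : R) : Prop := exists k : nat, l = INR (2 * k + 1) * x.

Definition has_odd_cycle (lam : R) (C : {set 'I_(nV G)}) : Prop :=
  exists p, is_cycle lam p /\ odd_wrt (unit_len lam) (cycle_len p) /\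
            (forall d, d \in p -> dstart d \in C).

Definition beta0odd (lam : R) : nat :=
  #|[set C in comps lam | pbool (has_odd_cycle lam C)]|.

End MG.

From Stdlib Require Import Reals ZArith Lra Lia Psatz ClassicalEpsilon Classical.
From mathcomp Require Import all_boot all_algebra zify Rstruct.

Set Implicit Arguments.
Unset Strict Implicit.
Unset Printing Implicit Defensive.

Import GRing.Theory.

(* On an edge, a function of R(G, lam) solves -f'' = lam f and vanishes at both
   ends, so with w = sqrt lam it is f_e(x) = a_e / w * sin (w x), a_e = f_e'(0),
   and a_e can be nonzero only if sin (w L(e)) = 0, i.e. only on the edges of
   G_lam, where cos (w L(e)) = (-1)^k for L(e) = k pi / w.  The Kirchhoff
   conditions then say that the row a lies in the kernel of the signed incidence
   matrix A of G_lam, so dim R(G, lam) = |E(G_lam)| - rank A.  The kernel of A^T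
   consists of the vertex potentials y with y(o(e)) = (-1)^k y(t(e)): such a y
   is arbitrary at vertices outside G_lam, is determined on a component of G_lam
   by its value at one vertex, and must vanish on a component carrying an odd
   closed walk, which can be shortened to an odd cycle.  Hence
   |V| - rank A = |V| - |V(G_lam)| + beta0 - beta0odd, and rank-nullity gives
   beta1 - beta0odd. *)

(** * The eigenvalue equation on an edge *)

Section EdgeEquation.
Local Open Scope R_scope.

Lemma derivable_pt_lim_sin_scal w x :
  derivable_pt_lim (fun y => sin (w * y)) x (w * cos (w * x)).
Proof.
have Dw := derivable_pt_lim_scal id w x 1 (derivable_pt_lim_id x).
rewrite Rmult_1_r in Dw.
have := derivable_pt_lim_comp _ sin x _ _ Dw (derivable_pt_lim_sin (w * x)).
by rewrite Rmult_comm.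
Qed.

Lemma derivable_pt_lim_cos_scal w x :
  derivable_pt_lim (fun y => cos (w * y)) x (- w * sin (w * x)).
Proof.
have Dw := derivable_pt_lim_scal id w x 1 (derivable_pt_lim_id x).
rewrite Rmult_1_r in Dw.
have -> : - w * sin (w * x) = - sin (w * x) * w by ring.
exact: derivable_pt_lim_comp _ cos x _ _ Dw (derivable_pt_lim_cos (w * x)).
Qed.

Lemma derivable_pt_lim_sin_cos w a b x :
  derivable_pt_lim (fun y => a * sin (w * y) + b * cos (w * y)) x
    (- (b * w) * sin (w * x) + a * w * cos (w * x)).
Proof.
have -> : - (b * w) * sin (w * x) + a * w * cos (w * x) =
          a * (w * cos (w * x)) + b * (- w * sin (w * x)) by ring.
exact: derivable_pt_lim_plus _ _ x _ _
  (derivable_pt_lim_scal _ a x _ (derivable_pt_lim_sin_scal w x))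
  (derivable_pt_lim_scal _ b x _ (derivable_pt_lim_cos_scal w x)).
Qed.

Lemma continuity_pt_sin_cos w a b x :
  continuity_pt (fun y => a * sin (w * y) + b * cos (w * y)) x.
Proof. by apply: derivable_continuous_pt; eexists; apply: derivable_pt_lim_sin_cos. Qed.

Lemma derivable_pt_lim_0_const F a b :
  (forall x, a < x < b -> derivable_pt_lim F x 0) ->
  forall x y, a < x < b -> a < y < b -> F x = F y.
Proof.
move=> F'0.
suff lt_eq x y : a < x < b -> a < y < b -> x < y -> F x = F y.
  move=> x y Hx Hy; case: (Rtotal_order x y) => [xy|[-> //|yx]].
  - exact: lt_eq.
  - by symmetry; apply: lt_eq.
move=> Hx Hy xy.
have [c [Fxy _]] := MVT_cor2 F (fun _ => 0) x y xy (fun c Hc => F'0 c ltac:(lra)).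
lra.
Qed.

Lemma ode_sin_cos w L f g : 0 < w ->
  (forall x, 0 < x < L ->
     derivable_pt_lim f x (g x) /\ derivable_pt_lim g x (- (w * w) * f x)) ->
  exists a b, forall x, 0 < x < L ->
    f x = a * sin (w * x) + b * cos (w * x) /\
    g x = - (b * w) * sin (w * x) + a * w * cos (w * x).
Proof.
move=> w_gt0 ode.
(* Two first integrals of the system; they are the coefficients [b] and [a]. *)
pose P x := f x * cos (w * x) - / w * g x * sin (w * x).
pose Q x := f x * sin (w * x) + / w * g x * cos (w * x).
have P'0 x : 0 < x < L -> derivable_pt_lim P x 0.
  case/ode => f' g'.
  have := derivable_pt_lim_minus _ _ x _ _
    (derivable_pt_lim_mult _ _ x _ _ f' (derivable_pt_lim_cos_scal w x))
    (derivable_pt_lim_mult _ _ x _ _ (derivable_pt_lim_scal g (/ w) x _ g')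
       (derivable_pt_lim_sin_scal w x)).
  by congr derivable_pt_lim; rewrite /mult_real_fct; field; lra.
have Q'0 x : 0 < x < L -> derivable_pt_lim Q x 0.
  case/ode => f' g'.
  have := derivable_pt_lim_plus _ _ x _ _
    (derivable_pt_lim_mult _ _ x _ _ f' (derivable_pt_lim_sin_scal w x))
    (derivable_pt_lim_mult _ _ x _ _ (derivable_pt_lim_scal g (/ w) x _ g')
       (derivable_pt_lim_cos_scal w x)).
  by congr derivable_pt_lim; rewrite /mult_real_fct; field; lra.
case: (Rlt_or_le 0 L) => [L_gt0|L_le0]; last by exists 0, 0 => x; lra.
have mid : 0 < L / 2 < L by lra.
exists (Q (L / 2)), (P (L / 2)) => x Hx.
rewrite -(derivable_pt_lim_0_const P'0 Hx mid) -(derivable_pt_lim_0_const Q'0 Hx mid).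
have := sin2_cos2 (w * x); rewrite /P /Q /Rsqr => sc.
split.
- transitivity (f x * (sin (w * x) * sin (w * x) + cos (w * x) * cos (w * x)));
    [by rewrite sc; ring | ring].
- transitivity (g x * (sin (w * x) * sin (w * x) + cos (w * x) * cos (w * x)));
    [by rewrite sc; ring | field; lra].
Qed.

Lemma adhDa_open_interval L x0 : 0 < L -> 0 <= x0 <= L -> adhDa (fun x => 0 < x < L) x0.
Proof.
move=> L_gt0 x0L alp alp_gt0.
set t := Rmin 1 (alp / L).
have t_pos : 0 < t by apply: Rmin_glb_lt; [lra | apply: Rdiv_lt_0_compat].
have t_le1 : t <= 1 by apply: Rmin_l.
have tL : t * L <= alp.
  have -> : alp = alp / L * L by field; lra.
  by apply: Rmult_le_compat_r; [lra | apply: Rmin_r].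
exists ((1 - t) * x0 + t * (L / 2)); split; first by nra.
rewrite /R_dist; have -> : (1 - t) * x0 + t * (L / 2) - x0 = t * (L / 2 - x0) by ring.
rewrite Rabs_mult Rabs_pos_eq; last lra.
have : Rabs (L / 2 - x0) <= L / 2 by apply: Rabs_le; lra.
nra.
Qed.

Lemma limit1_in_continuity_pt f h D l x0 : adhDa D x0 ->
  (forall x, D x -> f x = h x) -> continuity_pt h x0 ->
  limit1_in f D l x0 -> l = h x0.
Proof.
move=> adh fh h_cont f_lim; apply: (single_limit _ _ _ _ _ adh f_lim) => eps eps_gt0.
have [alp [alp_gt0 near]] := h_cont eps eps_gt0.
exists alp; split => // x [Dx dx]; rewrite fh //.
case: (Req_dec x x0) => [->|x_neq]; first by rewrite (proj2 (dist_refl _ _ _)).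
by apply: near; split => //; split => //; apply: nesym.
Qed.

Lemma continuity_pt_limit1_in h (D : R -> Prop) x0 :
  ~ D x0 -> continuity_pt h x0 -> limit1_in h D (h x0) x0.
Proof.
move=> Dx0 h_cont eps eps_gt0; have [alp [alp_gt0 near]] := h_cont eps eps_gt0.
exists alp; split => // x [Dx dx]; apply: near; split => //; split => //.
by move=> eq_x; apply: Dx0; rewrite eq_x.
Qed.

Section Dirichlet.
Variables (w L : R).
Hypotheses (w_gt0 : 0 < w) (L_gt0 : 0 < L).
Let I x := 0 < x < L.

Lemma dirichlet_solution_sin f g d0 dL :
  (forall x, I x -> derivable_pt_lim f x (g x) /\
                    derivable_pt_lim g x (- (w * w) * f x)) ->
  limit1_in f I 0 0 -> limit1_in f I 0 L ->
  limit1_in g I d0 0 -> limit1_in g I dL L ->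
  [/\ forall x, I x -> f x = d0 / w * sin (w * x),
      d0 * sin (w * L) = 0 & dL = d0 * cos (w * L)].
Proof.
move=> ode f0 fL g0 gL.
have [a [b fg]] := ode_sin_cos w_gt0 ode.
have adh0 : adhDa I 0 by apply: adhDa_open_interval; lra.
have adhL : adhDa I L by apply: adhDa_open_interval; lra.
have f_sol x : I x -> f x = a * sin (w * x) + b * cos (w * x) by case/fg.
have g_sol x : I x -> g x = - (b * w) * sin (w * x) + a * w * cos (w * x) by case/fg.
have := limit1_in_continuity_pt adh0 f_sol (continuity_pt_sin_cos w a b 0) f0.
have := limit1_in_continuity_pt adh0 g_sol (continuity_pt_sin_cos w _ _ 0) g0.
have := limit1_in_continuity_pt adhL f_sol (continuity_pt_sin_cos w a b L) fL.
have := limit1_in_continuity_pt adhL g_sol (continuity_pt_sin_cos w _ _ L) gL.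
rewrite Rmult_0_r sin_0 cos_0 => -> fL0 d0E f00.
have b0 : b = 0 by lra.
have aE : a = d0 / w by rewrite d0E b0; field; lra.
split.
- by move=> x /f_sol ->; rewrite aE b0; ring.
- have -> : d0 = w * a by rewrite aE; field; lra.
  by rewrite b0 Rmult_0_l Rplus_0_r in fL0; rewrite Rmult_assoc -fL0 Rmult_0_r.
- by rewrite d0E aE b0; field; lra.
Qed.

Lemma sin_dirichlet_solution d : d * sin (w * L) = 0 ->
  [/\ forall x, derivable_pt_lim (fun y => d / w * sin (w * y)) x (d * cos (w * x)) /\
        derivable_pt_lim (fun y => d * cos (w * y)) x
          (- (w * w) * (d / w * sin (w * x))),
      limit1_in (fun y => d / w * sin (w * y)) I 0 0,
      limit1_in (fun y => d / w * sin (w * y)) I 0 L,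
      limit1_in (fun y => d * cos (w * y)) I d 0 &
      limit1_in (fun y => d * cos (w * y)) I (d * cos (w * L)) L].
Proof.
move=> sin_L.
have f_cont x : continuity_pt (fun y => d / w * sin (w * y)) x.
  by apply: continuity_pt_scal; apply: derivable_continuous_pt; eexists;
     apply: derivable_pt_lim_sin_scal.
have g_cont x : continuity_pt (fun y => d * cos (w * y)) x.
  by apply: continuity_pt_scal; apply: derivable_continuous_pt; eexists;
     apply: derivable_pt_lim_cos_scal.
have I0 : ~ I 0 by rewrite /I; lra.
have IL : ~ I L by rewrite /I; lra.
split.
- move=> x; split.
  + have -> : d * cos (w * x) = d / w * (w * cos (w * x)) by field; lra.
    exact: derivable_pt_lim_scal _ _ _ _ (derivable_pt_lim_sin_scal w x).
  + have -> : - (w * w) * (d / w * sin (w * x)) = d * (- w * sin (w * x)) by field; lra.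
    exact: derivable_pt_lim_scal _ _ _ _ (derivable_pt_lim_cos_scal w x).
- by have := continuity_pt_limit1_in I0 (f_cont 0); rewrite Rmult_0_r sin_0 Rmult_0_r.
- have := continuity_pt_limit1_in IL (f_cont L).
  have -> : d / w * sin (w * L) = / w * (d * sin (w * L)) by field; lra.
  by rewrite sin_L Rmult_0_r.
- by have := continuity_pt_limit1_in I0 (g_cont 0); rewrite Rmult_0_r cos_0 Rmult_1_r.
- exact: continuity_pt_limit1_in IL (g_cont L).
Qed.

Lemma exists_sin_neq0 : exists2 x, I x & sin (w * x) <> 0.
Proof.
have PI_gt0 := PI_RGT_0.
set m := Rmin L (PI / w).
have m_gt0 : 0 < m by apply: Rmin_glb_lt => //; apply: Rdiv_lt_0_compat.
have mL : m <= L by apply: Rmin_l.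
have m_PI : w * m <= PI.
  have -> : PI = w * (PI / w) by field; lra.
  by apply: Rmult_le_compat_l; [lra | apply: Rmin_r].
exists (m / 2); first by rewrite /I; lra.
by apply: Rgt_not_eq; apply: sin_gt_0; nra.
Qed.

End Dirichlet.

Lemma sin_INR_PI k : sin (INR k * PI) = 0.
Proof.
elim: k => [|k IH]; first by rewrite Rmult_0_l sin_0.
by rewrite S_INR Rmult_plus_distr_r Rmult_1_l neg_sin IH Ropp_0.
Qed.

Lemma cos_INR_PI k : cos (INR k * PI) = if odd k then -1 else 1.
Proof.
elim: k => [|k IH]; first by rewrite Rmult_0_l cos_0.
rewrite S_INR Rmult_plus_distr_r Rmult_1_l neg_cos IH /=.
by case: (odd k) => /=; ring.
Qed.

Lemma sin_eq_0_INR x : 0 < x -> sin x = 0 -> exists k : nat, x = INR k * PI.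
Proof.
move=> x_gt0 /sin_eq_0_0 [k x_eq]; rewrite x_eq in x_gt0 *.
case: (Z.le_gt_cases 0 k) => [k_ge0|k_lt0].
- by exists (Z.to_nat k); rewrite INR_IZR_INZ Z2Nat.id.
- have k_le : IZR k <= -1 by apply: IZR_le; lia.
  by exfalso; have := PI_RGT_0; nra.
Qed.

End EdgeEquation.

(** * Walks and odd cycles in G_lam *)

Lemma pboolP (P : Prop) : reflect P (pbool P).
Proof. by rewrite /pbool; case: excluded_middle_informative => H; constructor. Qed.

Section Walks.
Variables (G : mgraph) (lam : R).

Local Notation vertex := 'I_(nV G).
Local Notation dart := ('I_(nE G) * bool)%type.
Local Notation dstart := (dstart G).
Local Notation dend := (dend G).
Local Notation inGl := (inGl G lam).
Local Notation adj := (adjl G lam).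

Fixpoint lwalk (v : vertex) (w : seq dart) : bool :=
  if w is d :: w' then [&& dstart d == v, inGl d.1 & lwalk (dend d) w'] else true.

Definition walk_end (v : vertex) (w : seq dart) : vertex := last v (map dend w).

Definition closed_lwalk (v : vertex) (w : seq dart) : bool :=
  lwalk v w && (walk_end v w == v).

(* Junk value 0 when [e] is not an edge of [G_lam]. *)
Definition halfwaves (e : 'I_(nE G)) : nat :=
  if excluded_middle_informative (exists k : nat, len G e = Rmult (INR k) (unit_len lam))
  is left ex then proj1_sig (constructive_indefinite_description _ ex) else 0.

Lemma halfwavesP e : inGl e -> len G e = Rmult (INR (halfwaves e)) (unit_len lam).
Proof.
rewrite /inGl /pbool /halfwaves; case: excluded_middle_informative => // ex _.
exact: proj2_sig (constructive_indefinite_description _ ex).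
Qed.

Definition walk_halfwaves (w : seq dart) : nat := \sum_(d <- w) halfwaves d.1.

Lemma walk_halfwaves_cat a b :
  walk_halfwaves (a ++ b) = (walk_halfwaves a + walk_halfwaves b)%N.
Proof. exact: big_cat. Qed.

Lemma walk_halfwaves_cons d w :
  walk_halfwaves (d :: w) = (halfwaves d.1 + walk_halfwaves w)%N.
Proof. exact: big_cons. Qed.

Lemma lwalk_cat v a b : lwalk v (a ++ b) = lwalk v a && lwalk (walk_end v a) b.
Proof. by elim: a v => [|d a IH] v //=; rewrite IH !andbA. Qed.

Lemma walk_end_cat v a b : walk_end v (a ++ b) = walk_end (walk_end v a) b.
Proof. by rewrite /walk_end map_cat last_cat. Qed.

Lemma walk_end_take v w k x0 : lwalk v w -> (k < size w)%N ->
  walk_end v (take k w) = dstart (nth x0 w k).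
Proof.
move=> vw k_lt; move: vw; rewrite -{1}(cat_take_drop k w) (drop_nth x0 k_lt).
by rewrite lwalk_cat => /andP [_ /= /and3P [/eqP ->]].
Qed.

Lemma walk_end_takeS v w k x0 : (k < size w)%N ->
  walk_end v (take k.+1 w) = dend (nth x0 w k).
Proof. by move=> k_lt; rewrite (take_nth x0 k_lt) /walk_end map_rcons last_rcons. Qed.

Lemma closed_lwalk_cycle d p :
  closed_lwalk (dstart d) (d :: p) =
  all (fun d => inGl d.1) (d :: p) && cycle (fun d1 d2 => dend d1 == dstart d2) (d :: p).
Proof.
have lwalkE u q : lwalk (dend u) q =
    all (fun d => inGl d.1) q && path (fun d1 d2 => dend d1 == dstart d2) u q.
  elim: q u => [|d' q IH] u //=; rewrite IH eq_sym.
  by case: (_ == _); rewrite /= ?andbA ?andbF.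
rewrite /closed_lwalk /= lwalkE rcons_path /walk_end /= last_map eqxx.
by rewrite /= !andbA.
Qed.

Lemma lwalk_nth_next v w k x0 : closed_lwalk v w -> (k < size w)%N ->
  dend (nth x0 w k) = dstart (nth x0 w (k.+1 %% size w)).
Proof.
case/andP=> vw /eqP wv k_lt; rewrite -(walk_end_takeS v x0 k_lt).
case: (ltnP k.+1 (size w)) => [kS_lt|kS_ge].
- by rewrite modn_small // (walk_end_take x0 vw).
- have kS_eq : k.+1 = size w by apply/eqP; rewrite eqn_leq kS_ge k_lt.
  rewrite kS_eq modnn take_size wv.
  by case: w vw k_lt kS_eq kS_ge {wv} => [|d w] //= /and3P [/eqP ->].
Qed.

Lemma closed_lwalk_split v w : closed_lwalk v w -> ~~ uniq (map dstart w) ->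
  exists u a c b, [/\ w = a ++ c ++ b, (size c < size w)%N, (size (a ++ b) < size w)%N,
                      closed_lwalk u c & closed_lwalk v (a ++ b)].
Proof.
case: w => [|x0 w0] //; set w := x0 :: w0 => closed_w.
case/(uniqPn (dstart x0)) => i [j [ij]]; rewrite size_map => j_lt.
have i_lt : (i < size w)%N by apply: ltn_trans j_lt.
rewrite !(nth_map x0) // => start_ij.
have wE : w = take i w ++ take (j - i) (drop i w) ++ drop j w.
  by rewrite -{2}(subnK (ltnW ij)) -drop_drop !cat_take_drop.
have take_j : take i w ++ take (j - i) (drop i w) = take j w by rewrite -takeD subnKC // ltnW.
have size_c : size (take (j - i) (drop i w)) = (j - i)%N.
  by rewrite size_take size_drop; case: ltnP => //; lia.
case/andP: (closed_w) => lw /eqP wv.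
move: (lw); rewrite {1}wE !lwalk_cat => /and3P [la lc lb].
have end_a : walk_end v (take i w) = dstart (nth x0 w i) by apply: walk_end_take.
have end_c : walk_end (walk_end v (take i w)) (take (j - i) (drop i w)) =
             walk_end v (take i w).
  by rewrite -walk_end_cat take_j end_a (walk_end_take x0 lw j_lt) start_ij.
exists (walk_end v (take i w)), (take i w), (take (j - i) (drop i w)), (drop j w).
split => //.
- by rewrite size_c; lia.
- by rewrite size_cat size_take size_drop i_lt; lia.
- by rewrite /closed_lwalk lc end_c eqxx.
- rewrite /closed_lwalk lwalk_cat walk_end_cat la -end_c lb.
  by rewrite -!walk_end_cat -wE wv eqxx.
Qed.

Lemma uniq_dstart_nth_inj w x0 i j : uniq (map dstart w) ->
  (i < size w)%N -> (j < size w)%N -> dstart (nth x0 w i) = dstart (nth x0 w j) -> i = j.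
Proof.
move=> uniq_start i_lt j_lt eq_ij; apply/eqP.
by rewrite -(nth_uniq (dstart x0) _ _ uniq_start) ?size_map // !(nth_map x0) // eq_ij.
Qed.

Lemma closed_lwalk_back_forth v w x0 i j :
  closed_lwalk v w -> uniq (map dstart w) -> (i < j < size w)%N ->
  dend (nth x0 w i) = dstart (nth x0 w j) -> dend (nth x0 w j) = dstart (nth x0 w i) ->
  [/\ i = 0, j = 1 & size w = 2].
Proof.
move=> closed_w uniq_start /andP [ij j_lt] ij_next ji_next.
have i_lt : (i < size w)%N by apply: ltn_trans j_lt.
have mod_lt k : (k.+1 %% size w < size w)%N by rewrite ltn_mod; case: (size w) i_lt.
have ji : j = (i.+1 %% size w)%N.
  apply: (uniq_dstart_nth_inj (x0 := x0) uniq_start j_lt (mod_lt i)).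
  by rewrite -ij_next (lwalk_nth_next x0 closed_w).
have ij' : i = (j.+1 %% size w)%N.
  apply: (uniq_dstart_nth_inj (x0 := x0) uniq_start i_lt (mod_lt j)).
  by rewrite -ji_next (lwalk_nth_next x0 closed_w).
have iS_lt : (i.+1 < size w)%N.
  rewrite ltn_neqAle i_lt andbT; apply: contraTneq ij => iS_eq.
  by rewrite ji iS_eq modnn -iS_eq.
rewrite (modn_small iS_lt) in ji; subst j.
case: (ltnP i.+2 (size w)) => [iSS_lt|iSS_ge]; first by rewrite modn_small in ij'; lia.
have iSS_eq : i.+2 = size w by lia.
by rewrite iSS_eq modnn in ij'; subst i.
Qed.

(* With distinct start vertices, an edge can only repeat in a closed walk of
   length 2 that runs back and forth along it. *)
Lemma closed_lwalk_uniq_edges v w : closed_lwalk v w -> uniq (map dstart w) ->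
  odd (walk_halfwaves w) -> uniq (map fst w).
Proof.
case: w => [|x0 w0] //; set w := x0 :: w0 => closed_w uniq_start odd_w.
apply/negbNE/negP => /(uniqPn x0.1) [i [j [ij]]]; rewrite size_map => j_lt.
have i_lt : (i < size w)%N by apply: ltn_trans j_lt.
rewrite !(nth_map x0) //.
case Ei: (nth x0 w i) => [e b]; case Ej: (nth x0 w j) => [e' b'] /= ee'; subst e'.
have b'E : b' = ~~ b.
  case: b b' Ei Ej => [] [] // Ei Ej; move: ij;
    by rewrite (uniq_dstart_nth_inj (x0 := x0) uniq_start i_lt j_lt) ?ltnn // Ei Ej.
subst b'.
have [i0 j1 size_w] : [/\ i = 0, j = 1 & size w = 2].
  apply: (closed_lwalk_back_forth (x0 := x0) closed_w uniq_start);
    by rewrite ?ij ?j_lt ?Ei ?Ej //; case: b {Ei Ej}.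
subst i j; rewrite /= in Ei Ej.
move: odd_w; rewrite /walk_halfwaves (big_nth x0) size_w big_mkord !big_ord_recl big_ord0.
by rewrite /= add0n Ej Ei /= addn0 addnn odd_double.
Qed.

Lemma odd_closed_lwalk_cycle v w : closed_lwalk v w -> odd (walk_halfwaves w) ->
  exists p, [/\ is_cycle G lam p, odd (walk_halfwaves p) &
                {subset map dstart p <= map dstart w}].
Proof.
have [n] := ubnP (size w); elim: n => // n IH in v w *; rewrite ltnS => size_w closed_w odd_w.
case: (boolP (uniq (map dstart w))) => [uniq_start|]; last first.
  case/(closed_lwalk_split closed_w) => u [a [c [b [wE size_c size_ab closed_c closed_ab]]]].
  have : odd (walk_halfwaves c) (+) odd (walk_halfwaves (a ++ b)).
    move: odd_w; rewrite wE !walk_halfwaves_cat !oddD.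
    by case: (odd (walk_halfwaves a)); case: (odd (walk_halfwaves c)).
  case: (boolP (odd (walk_halfwaves c))) => [odd_c _|_ /= odd_ab].
  - have [p [cyc_p odd_p pc]] := IH u c (leq_trans size_c size_w) closed_c odd_c.
    by exists p; split => // x /pc xc; rewrite wE !map_cat !mem_cat xc orbT.
  - have [p [cyc_p odd_p pab]] := IH v _ (leq_trans size_ab size_w) closed_ab odd_ab.
    exists p; split => // x /pab.
    by rewrite wE !map_cat !mem_cat => /orP [] ->; rewrite ?orbT.
case: w closed_w odd_w size_w uniq_start => [|d p]; first by rewrite /walk_halfwaves big_nil.
move=> closed_w odd_w _ uniq_start; exists (d :: p); split => //.
have dv : dstart d = v by case/andP: closed_w => /= /and3P [/eqP].
move: (closed_w); rewrite -dv closed_lwalk_cycle => /andP [all_Gl cyc].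
by split=> //; split => //; split => //; apply: closed_lwalk_uniq_edges closed_w _ _.
Qed.

Lemma adjl_sym : symmetric adj.
Proof.
by move=> u v; apply/existsP/existsP => -[e /andP [Gl_e uv]]; exists e;
   rewrite Gl_e orbC.
Qed.

Lemma connect_adjl_sym : connect_sym adj.
Proof. exact: sym_connect_sym adjl_sym. Qed.

Lemma lwalk_connect v w : lwalk v w -> connect adj v (walk_end v w).
Proof.
elim: w v => [|d w IH] v /=; first by rewrite connect0.
case/and3P=> /eqP <- Gl_d /IH; apply: connect_trans; apply: connect1.
by apply/existsP; exists d.1; case: d Gl_d => e [] /= ->; rewrite !eqxx ?orbT.
Qed.

Lemma connect_lwalk v u : connect adj v u -> exists2 w, lwalk v w & walk_end v w = u.
Proof.
case/connectP=> p; elim: p v => [|x p IH] v /=; first by move=> _ ->; exists [::].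
case/andP=> /existsP [e /andP [Gl_e vx]] /IH xp /xp [w xw <-].
case/orP: vx => /andP [/eqP src_e /eqP tgt_e].
- exists ((e, true) :: w); last by rewrite /walk_end /= /dend /= tgt_e.
  by rewrite /= /dstart /dend /= src_e tgt_e eqxx Gl_e.
- exists ((e, false) :: w); last by rewrite /walk_end /= /dend /= src_e.
  by rewrite /= /dstart /dend /= src_e tgt_e eqxx Gl_e.
Qed.

Lemma lwalk_start_connect v w x : lwalk v w -> x \in map dstart w -> connect adj v x.
Proof.
move=> vw /mapP [d dw ->]; have [k k_lt <-] := nthP d dw.
by rewrite -(walk_end_take d vw k_lt); apply: lwalk_connect; move: vw;
   rewrite -{1}(cat_take_drop k w) lwalk_cat => /andP [].
Qed.

Lemma cycle_len_halfwaves p : all (fun d => inGl d.1) p ->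
  cycle_len G p = Rmult (INR (walk_halfwaves p)) (unit_len lam).
Proof.
elim: p => [|d p IH] /=.
  by move=> _; rewrite /cycle_len /walk_halfwaves !big_nil /= Rmult_0_l.
case/andP=> Gl_d /IH; rewrite /cycle_len big_cons => ->.
by rewrite walk_halfwaves_cons plus_INR Rmult_plus_distr_r -halfwavesP.
Qed.

Definition component (v : vertex) : {set vertex} := [set x | connect adj v x].

Lemma closed_lwalk_odd_cycle v w : closed_lwalk v w -> odd (walk_halfwaves w) ->
  has_odd_cycle G lam (component v).
Proof.
move=> closed_w odd_w; have [p [cyc_p odd_p pw]] := odd_closed_lwalk_cycle closed_w odd_w.
exists p; split => //; split.
- case: cyc_p => _ [all_p _]; rewrite cycle_len_halfwaves //.
  exists (walk_halfwaves p)./2; congr (Rmult (INR _) _).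
  by rewrite -{1}(odd_double_half (walk_halfwaves p)) odd_p -muln2; lia.
- move=> d dp; rewrite inE; apply: lwalk_start_connect (pw _ (map_f _ dp)).
  by case/andP: closed_w.
Qed.

Lemma odd_cycle_closed_lwalk C : Rlt 0 lam -> has_odd_cycle G lam C ->
  exists x w, [/\ x \in C, closed_lwalk x w & odd (walk_halfwaves w)].
Proof.
move=> lam_gt0 [[|d p] [[//= _ [all_p [_ [_ cyc]]]] [[k len_k] pC]]].
exists (dstart d), (d :: p); split.
- by apply: pC; rewrite inE eqxx.
- by rewrite closed_lwalk_cycle; apply/andP.
- have unit_gt0 : Rlt 0 (unit_len lam).
    by apply: Rdiv_lt_0_compat; [exact: PI_RGT_0 | exact: sqrt_lt_R0].
  rewrite cycle_len_halfwaves // in len_k.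
  have /INR_eq -> : INR (walk_halfwaves (d :: p)) = INR (2 * k + 1).
    by apply: (Rmult_eq_reg_r (unit_len lam)) => //; apply: Rgt_not_eq.
  by rewrite addn1 /= oddM.
Qed.

End Walks.

(** * Signed potentials and components of G_lam *)

Section Potentials.
Variables (G : mgraph) (lam : R).
Local Open Scope R_scope.
Hypothesis lam_gt0 : 0 < lam.

Local Notation vertex := 'I_(nV G).
Local Notation adj := (adjl G lam).
Local Notation lwalk := (@lwalk G lam).
Local Notation walk_end := (@walk_end G).
Local Notation closed_lwalk := (@closed_lwalk G lam).
Local Notation halfwaves := (@halfwaves G lam).
Local Notation walk_halfwaves := (@walk_halfwaves G lam).
Local Notation component := (@component G lam).

Definition sgn (n : nat) : R := if odd n then -1 else 1.

Lemma sgnD m n : sgn (m + n)%N = sgn m * sgn n.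
Proof. by rewrite /sgn oddD; case: (odd m); case: (odd n) => /=; ring. Qed.

Lemma sgn_sqr n : sgn n * sgn n = 1.
Proof. by rewrite /sgn; case: (odd n); ring. Qed.

(* These are the rows of the kernel of the transposed Kirchhoff matrix, see
   [kermx_tr_signed] below. *)
Definition signed_potential (y : vertex -> R) : Prop :=
  forall e, inGl G lam e -> y (src G e) = sgn (halfwaves e) * y (tgt G e).

Lemma signed_potential_lwalk y v w : signed_potential y -> lwalk v w ->
  y (walk_end v w) = sgn (walk_halfwaves w) * y v.
Proof.
move=> y_pot; elim: w v => [|[e b] w IH] v /=.
  by move=> _; rewrite /walk_end /sgn /walk_halfwaves big_nil /=; ring.
case/and3P=> /eqP <- Gl_e /IH; rewrite /walk_end /= => ->.
rewrite walk_halfwaves_cons sgnD /dstart /dend /=.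
have := sgn_sqr (halfwaves e); case: b; rewrite /= (y_pot e Gl_e) => sq.
- by rewrite -[LHS]Rmult_1_l -sq; ring.
- by ring.
Qed.

Lemma signed_potential_odd y v w : signed_potential y -> closed_lwalk v w ->
  odd (walk_halfwaves w) -> y v = 0.
Proof.
move=> y_pot /andP [vw /eqP wv] odd_w.
by have := signed_potential_lwalk y_pot vw; rewrite wv /sgn odd_w; lra.
Qed.

Definition root_potential (r u : vertex) : R :=
  if pbool (exists2 w, lwalk u w & walk_end u w = r) then
    if pbool (exists w, [/\ lwalk u w, walk_end u w = r & odd (walk_halfwaves w)])
    then -1 else 1
  else 0.

Definition balanced (r : vertex) : Prop := ~ has_odd_cycle G lam (component r).

Lemma balanced_parity r u w w' : balanced r ->
  lwalk u w -> walk_end u w = r -> lwalk u w' -> walk_end u w' = r ->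
  odd (walk_halfwaves w) = odd (walk_halfwaves w').
Proof.
move=> bal_r uw wr uw' w'r.
have [s rs su] : exists2 s, lwalk r s & walk_end r s = u.
  by apply: connect_lwalk; rewrite connect_adjl_sym -wr; apply: lwalk_connect.
have even_cycle q : lwalk u q -> walk_end u q = r -> ~~ odd (walk_halfwaves (s ++ q)).
  move=> uq qr; apply/negP => odd_sq; apply: bal_r; apply: closed_lwalk_odd_cycle odd_sq.
  by rewrite /closed_lwalk lwalk_cat walk_end_cat rs su uq qr eqxx.
move: (even_cycle _ uw wr) (even_cycle _ uw' w'r).
by rewrite !walk_halfwaves_cat !oddD; do 3 case: odd.
Qed.

Lemma root_potential_lwalk r u w : balanced r -> lwalk u w -> walk_end u w = r ->
  root_potential r u = sgn (walk_halfwaves w).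
Proof.
move=> bal_r uw wr; rewrite /root_potential.
have /pboolP -> : exists2 w, lwalk u w & walk_end u w = r by exists w.
case: pboolP => [[w' [uw' w'r odd_w']]|no_odd]; rewrite /sgn.
  by rewrite (balanced_parity bal_r uw wr uw' w'r) odd_w'.
by case: ifP => // odd_w; case: no_odd; exists w.
Qed.

Lemma root_potential_signed r : balanced r -> signed_potential (root_potential r).
Proof.
move=> bal_r e Gl_e.
case: (pboolP (exists2 w, lwalk (tgt G e) w & walk_end (tgt G e) w = r)).
  case=> w tw wr; rewrite (root_potential_lwalk bal_r tw wr).
  rewrite (@root_potential_lwalk _ _ ((e, true) :: w)) //.
  - by rewrite walk_halfwaves_cons sgnD.
  - by rewrite /= /dstart /dend /= eqxx Gl_e.
move=> no_walk; have no_walk' : ~ exists2 w, lwalk (src G e) w & walk_end (src G e) w = r.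
  case=> w sw wr; apply: no_walk; exists ((e, false) :: w) => //.
  by rewrite /= /dstart /dend /= eqxx Gl_e.
rewrite /root_potential; case: pboolP => // _; case: pboolP => // _; ring.
Qed.

Local Notation root := (fingraph.root adj).

Definition free_roots : {set vertex} :=
  [set r | (root r == r) && ~~ pbool (has_odd_cycle G lam (component r))].

Lemma free_roots_balanced r : r \in free_roots -> balanced r.
Proof. by rewrite inE => /andP [_ /negP odd_r] /pboolP. Qed.

Lemma root_potential_free r r' : r \in free_roots -> r' \in free_roots ->
  root_potential r r' = if r' == r then 1 else 0.
Proof.
move=> r_free r'_free; have bal_r := free_roots_balanced r_free.
move: r_free r'_free; rewrite !inE => /andP [/eqP root_r _] /andP [/eqP root_r' _].
case: eqP => [->|r'r].
  by rewrite (@root_potential_lwalk _ _ [::]) // /sgn /walk_halfwaves big_nil.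
rewrite /root_potential; case: pboolP => // -[w r'w wr]; case: r'r.
have /(fingraph.rootP (@connect_adjl_sym G lam)) : connect adj r' r.
  by rewrite -wr; apply: lwalk_connect.
by rewrite root_r root_r'.
Qed.

Lemma signed_potential_connect y v x : signed_potential y -> connect adj v x ->
  y x = 0 -> y v = 0.
Proof.
move=> y_pot /connect_lwalk [w vw <-]; rewrite (signed_potential_lwalk y_pot vw).
by case/Rmult_integral => //; rewrite /sgn; case: odd; lra.
Qed.

Lemma signed_potential_free_eq0 y : signed_potential y ->
  {in free_roots, forall r, y r = 0} -> forall v, y v = 0.
Proof.
move=> y_pot y_free v; have v_root := fingraph.connect_root adj v.
case: (pboolP (has_odd_cycle G lam (component (root v)))) => [odd_r|bal_r].
  have [x [q [xr closed_q odd_q]]] := odd_cycle_closed_lwalk lam_gt0 odd_r.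
  apply: (signed_potential_connect y_pot (connect_trans v_root _)).
    by rewrite inE in xr; apply: xr.
  exact: signed_potential_odd y_pot closed_q odd_q.
apply: (signed_potential_connect y_pot v_root); apply: y_free.
rewrite inE (fingraph.root_root (@connect_adjl_sym G lam)) eqxx /=.
by apply/negP => /pboolP.
Qed.

End Potentials.

Section Components.
Variables (G : mgraph) (lam : R).

Local Notation vertex := 'I_(nV G).
Local Notation adj := (adjl G lam).
Local Notation root := (fingraph.root adj).
Local Notation component := (@component G lam).
Local Notation free_roots := (free_roots G lam).

Lemma dstart_Vl d : inGl G lam d.1 -> dstart G d \in Vl G lam.
Proof.
move=> Gl_d; rewrite inE; apply/existsP; exists d.1.
by case: d Gl_d => e [] /= ->; rewrite eqxx ?orbT.
Qed.

Lemma connect_notin_Vl v x : v \notin Vl G lam -> connect adj v x -> x = v.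
Proof.
move=> /negP vNVl /connectP [[|y p] /=]; first by move=> _ ->.
case/andP=> /existsP [e /andP [Gl_e /orP [] /andP [/eqP src_e /eqP tgt_e]]] _ _;
  case: vNVl.
- by rewrite -src_e; apply: (dstart_Vl (d := (e, true))).
- by rewrite -tgt_e; apply: (dstart_Vl (d := (e, false))).
Qed.

Lemma odd_cycle_Vl v : has_odd_cycle G lam (component v) -> v \in Vl G lam.
Proof.
case=> [[|d p] [[//= _ [/andP [Gl_d _] _]] [_ pC]]].
have := pC d (mem_head _ _); rewrite inE => vd.
apply: contraT => vNVl; have dv := connect_notin_Vl vNVl vd.
by move: vNVl; rewrite -dv (dstart_Vl Gl_d).
Qed.

Definition Vl_roots : {set vertex} := [set v in Vl G lam | root v == v].

Definition odd_roots : {set vertex} :=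
  [set v in Vl_roots | pbool (has_odd_cycle G lam (component v))].

Lemma component_inj : {in Vl_roots &, injective component}.
Proof.
move=> r r'; rewrite !inE => /andP [_ /eqP root_r] /andP [_ /eqP root_r'] comp_rr'.
have : r' \in component r by rewrite comp_rr' inE connect0.
by rewrite inE => /(fingraph.rootP (@connect_adjl_sym G lam)); rewrite root_r root_r'.
Qed.

Lemma comps_Vl_roots : comps G lam = component @: Vl_roots.
Proof.
apply/setP => C; apply/imsetP/imsetP => -[v v_in ->]; last first.
  by exists v => //; move: v_in; rewrite inE => /andP [].
have v_root := fingraph.connect_root adj v.
exists (root v).
  rewrite inE (fingraph.root_root (@connect_adjl_sym G lam)) eqxx andbT.
  apply: contraLR v_in => rNVl.
  have r_v : connect adj (root v) v by rewrite (@connect_adjl_sym G lam).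
  by rewrite (connect_notin_Vl rNVl r_v).
apply/setP => x; rewrite !inE; apply/idP/idP => [vx|]; last exact: connect_trans v_root.
by apply: connect_trans vx; rewrite (@connect_adjl_sym G lam).
Qed.

Lemma beta0E : beta0 G lam = #|Vl_roots|.
Proof. by rewrite /beta0 comps_Vl_roots card_in_imset //; apply: component_inj. Qed.

Lemma beta0oddE : beta0odd G lam = #|odd_roots|.
Proof.
have odd_inj : {in odd_roots &, injective component}.
  by apply: sub_in2 component_inj => v; rewrite inE => /andP [].
rewrite /beta0odd comps_Vl_roots -(card_in_imset odd_inj).
apply: eq_card => C; rewrite inE; apply/andP/imsetP.
- by case=> /imsetP [v v_in ->] odd_v; exists v; rewrite // inE v_in.
- by case=> v; rewrite inE => /andP [v_in odd_v] ->; rewrite imset_f.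
Qed.

(* Vertices outside [G_lam] are isolated, hence roots of their own components. *)
Lemma free_rootsE : free_roots = ~: Vl G lam :|: (Vl_roots :\: odd_roots).
Proof.
apply/setP => v; rewrite in_setU in_setC in_setD.
case: (boolP (v \in Vl G lam)) => [|vNVl] /=.
  by rewrite !inE => ->; case: (root v == v); case: pbool.
rewrite !inE (connect_notin_Vl vNVl (fingraph.connect_root _ v)) eqxx /=.
by apply/negP => /pboolP /odd_cycle_Vl; rewrite (negbTE vNVl).
Qed.

Lemma card_free_roots :
  [/\ #|free_roots| = (nV G - #|Vl G lam| + (beta0 G lam - beta0odd G lam))%N,
      (beta0odd G lam <= beta0 G lam)%N & (beta0 G lam <= #|Vl G lam|)%N].
Proof.
have odd_sub : odd_roots \subset Vl_roots by apply/subsetP => v; rewrite inE => /andP [].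
have roots_sub : Vl_roots \subset Vl G lam by apply/subsetP => v; rewrite inE => /andP [].
rewrite free_rootsE cardsU (_ : _ :&: _ = set0); last first.
  apply/eqP; rewrite setI_eq0 disjoint_sym disjoints_subset setCK.
  exact: subset_trans (subsetDl _ _) roots_sub.
rewrite cards0 subn0 cardsDS // cardsCs setCK card_ord beta0E beta0oddE.
by split => //; apply: subset_leq_card.
Qed.

End Components.

(** * Linear algebra *)

Section Pivots.
Local Open Scope ring_scope.

Lemma mxrank_pivots (F : fieldType) n k (Y : 'M[F]_n) (h : 'I_k -> 'I_n)
    (E : 'M[F]_(k, n)) :
  (E <= Y)%MS -> (forall i j, E i (h j) = (i == j)%:R) ->
  (forall y : 'rV[F]_n, (y <= Y)%MS -> (forall j, y 0 (h j) = 0) -> y = 0) ->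
  \rank Y = k.
Proof.
move=> EY E_pivots Y_pivots.
pose P : 'M[F]_(n, k) := \matrix_(v, j) (v == h j)%:R.
have MP m (z : 'M[F]_(m, n)) i j : (z *m P) i j = z i (h j).
  rewrite !mxE (bigD1 (h j)) //= big1 => [|v /negbTE vh]; last by rewrite !mxE vh mulr0.
  by rewrite !mxE eqxx mulr1 addr0.
have EP : E *m P = 1%:M by apply/matrixP => i j; rewrite MP E_pivots mxE.
have rankE : \rank E = k.
  by apply/eqP; rewrite eqn_leq rank_leq_row /= -{1}(mxrank1 F k) -EP mxrankM_maxl.
have YE : (Y <= E)%MS.
  apply/row_subP => i; set y := row i Y.
  have yE : y - y *m P *m E = 0.
    apply: Y_pivots => [|j].
      by rewrite addmx_sub ?row_sub // -mulNmx (submx_trans (submxMl _ E) EY).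
    by rewrite -MP mulmxBl -(mulmxA (y *m P)) EP mulmx1 subrr mxE.
  by move/eqP: yE; rewrite subr_eq0 => /eqP ->; apply: submxMl.
by apply/eqP; rewrite -[X in _ == X]rankE eqn_leq !mxrankS.
Qed.

End Pivots.

Section Dimension.
Variable G : mgraph.
Local Open Scope R_scope.

Lemma has_dim_row_space m p (K : 'M[R]_(p, m)) (S : gfun G -> Prop)
    (phi : 'rV[R]_m -> gfun G) :
  (forall a r s e x, phi (a *: r + s) e x = a * phi r e x + phi s e x)%R ->
  (forall r, (forall e x, edge_int G e x -> phi r e x = 0) -> r = 0%R) ->
  (forall r, (r <= K)%MS -> S (phi r)) ->
  (forall f, S f -> exists2 r, (r <= K)%MS &
     forall e x, edge_int G e x -> f e x = phi r e x) ->
  has_dim G S (\rank K).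
Proof.
move=> phi_lin phi_inj phi_S S_phi.
have phi_sum (c : 'I_(\rank K) -> R) (rs : 'I_(\rank K) -> 'rV[R]_m) e x :
    phi (\sum_i c i *: rs i)%R e x = \big[Rplus/0]_i (c i * phi (rs i) e x).
  elim/big_rec2: _ => [|i y1 y2 _ <-]; last by rewrite phi_lin.
  have := phi_lin 1 0%R 0%R e x.
  by rewrite scale1r addr0 mul1r -{1}[phi 0%R e x]addr0 => /addrI <-.
set B := row_base K.
have BK : (B <= K)%MS by rewrite eq_row_base.
exists (fun i => phi (row i B)); split; [|split].
- by move=> i; apply: phi_S; apply: submx_trans (row_sub i B) BK.
- move=> c c_indep i.
  have : (\row_i c i *m B = 0 *m B)%R.
    rewrite mulmx_sum_row mul0mx; apply: phi_inj => e x ex.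
    by rewrite phi_sum; under eq_bigr do rewrite mxE; apply: c_indep.
  by move/(row_free_inj (row_base_free K))/rowP/(_ i); rewrite !mxE.
- move=> f /S_phi [r rK fr].
  have /submxP [D rD] : (r <= B)%MS by rewrite eq_row_base.
  exists (fun i => D ord0 i) => e x ex.
  by rewrite fr // rD mulmx_sum_row phi_sum.
Qed.

Lemma has_dim_neq0 S d : has_dim G S d ->
  (exists f, S f /\ exists e x, edge_int G e x /\ f e x <> 0) <-> d <> 0%N.
Proof.
move=> [b [b_S [b_indep b_span]]]; split.
- move=> [f [f_S [e [x [ex fx]]]]] d0; subst d.
  by have [c fc] := b_span f f_S; apply: fx; rewrite fc // big_ord0.
- case: d b b_S b_indep {b_span} => // d b b_S b_indep _.
  exists (b ord0); split => //; apply: NNPP => b0_eq0.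
  pose c i := if i == ord0 :> 'I_d.+1 then 1 else 0.
  suff : c ord0 = 0 by rewrite /c eqxx; lra.
  apply: b_indep => e x ex; rewrite big_ord_recl big1 /= => [|i _]; last by rewrite Rmult_0_l.
  rewrite Rmult_1_l Rplus_0_r; apply: NNPP => b0ex; apply: b0_eq0; by exists e, x.
Qed.

End Dimension.

(** * The Kirchhoff system *)

Section KirchhoffSystem.
Variables (G : mgraph) (lam : R).
Hypothesis lam_gt0 : Rlt 0 lam.

Local Notation halfwaves := (@halfwaves G lam).
Local Notation om := (sqrt lam).

Let om_gt0 : Rlt 0 om. Proof. exact: sqrt_lt_R0. Qed.

Section EdgeCoefficients.
Local Open Scope R_scope.

Definition edge_cos (e : 'I_(nE G)) : R := cos (om * len G e).

Definition kirchhoff (a : 'I_(nE G) -> R) (v : 'I_(nV G)) : R :=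
  \big[Rplus/0]_(e | tgt G e == v) (a e * edge_cos e) -
  \big[Rplus/0]_(e | src G e == v) a e.

Lemma inGl_sin_cos e :
  inGl G lam e -> sin (om * len G e) = 0 /\ edge_cos e = sgn (halfwaves e).
Proof.
move=> /halfwavesP len_e; rewrite /edge_cos.
have -> : om * len G e = INR (halfwaves e) * PI.
  by rewrite len_e /unit_len; field; exact: Rgt_not_eq _ _ om_gt0.
by rewrite sin_INR_PI cos_INR_PI.
Qed.

Lemma notin_Gl_sin e : ~~ inGl G lam e -> sin (om * len G e) <> 0.
Proof.
move=> /negP eNGl /sin_eq_0_INR [|k len_k].
  by apply: Rmult_lt_0_compat => //; exact: len_pos.
apply: eNGl; apply/pboolP; exists k; rewrite /unit_len.
have om_neq0 := Rgt_not_eq _ _ om_gt0.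
by apply: (Rmult_eq_reg_l om) => //; rewrite len_k; field.
Qed.

(* The coordinate of [f] on the edge [e] is its outgoing derivative [f_e'(0)]. *)
Lemma Rspace_coef f : Rspace G lam f -> exists a : 'I_(nE G) -> R,
  [/\ forall e x, edge_int G e x -> f e x = a e / om * sin (om * x),
      forall e, ~~ inGl G lam e -> a e = 0 &
      forall v, kirchhoff a v = 0].
Proof.
case=> g [d0 [dL [ode [lims vertex_cond]]]].
have edge_sol e : [/\ forall x, edge_int G e x -> f e x = d0 e / om * sin (om * x),
    d0 e * sin (om * len G e) = 0 & dL e = d0 e * cos (om * len G e)].
  case: (lims e) => f0 [fL [g0 gL]].
  apply: (dirichlet_solution_sin om_gt0 (len_pos e)) f0 fL g0 gL => x ex.
  by rewrite sqrt_sqrt; [exact: ode | lra].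
exists d0; split.
- by move=> e x ex; case: (edge_sol e) => -> //.
- move=> e /notin_Gl_sin sin_e; case: (edge_sol e) => _ /Rmult_integral [] //.
- move=> v; rewrite -(vertex_cond v) /kirchhoff; congr (_ - _).
  by apply: eq_bigr => e _; case: (edge_sol e).
Qed.

Lemma coef_Rspace a : (forall e, ~~ inGl G lam e -> a e = 0) ->
  (forall v, kirchhoff a v = 0) ->
  Rspace G lam (fun e x => a e / om * sin (om * x)).
Proof.
move=> a_Gl a_kir.
have a_sin e : a e * sin (om * len G e) = 0.
  by case: (boolP (inGl G lam e)) => [/inGl_sin_cos [-> _]|/a_Gl ->]; ring.
have edge_sol e := sin_dirichlet_solution om_gt0 (a_sin e).
have lamE : lam = om * om by rewrite sqrt_sqrt //; lra.
exists (fun e x => a e * cos (om * x)), a, (fun e => a e * edge_cos e).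
split; [|split] => // e; case: (edge_sol e) => ode f0 fL g0 gL //.
by move=> x _; rewrite [X in - X * _]lamE; apply: ode.
Qed.

End EdgeCoefficients.

Section KirchhoffMatrix.
Local Open Scope ring_scope.

Definition El_edge (j : 'I_#|El G lam|) : 'I_(nE G) := enum_val j.

Lemma El_edgeP j : inGl G lam (El_edge j).
Proof. by have := enum_valP j; rewrite inE. Qed.

Definition kirchhoff_mx : 'M[R]_(#|El G lam|, nV G) :=
  \matrix_(j, v) ((tgt G (El_edge j) == v)%:R * edge_cos (El_edge j) -
                  (src G (El_edge j) == v)%:R).

Definition edge_coef (r : 'rV[R]_#|El G lam|) (e : 'I_(nE G)) : R :=
  \sum_(j | El_edge j == e) r 0 j.

Lemma edge_coef_El r j : edge_coef r (El_edge j) = r 0 j.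
Proof. by rewrite /edge_coef (big_pred1 j) // => j'; rewrite (inj_eq enum_val_inj). Qed.

Lemma edge_coef_notin r e : ~~ inGl G lam e -> edge_coef r e = 0.
Proof.
move=> eNGl; rewrite /edge_coef big_pred0 // => j.
by apply: contraNF eNGl => /eqP <-; apply: El_edgeP.
Qed.

Lemma edge_coef_row (a : 'I_(nE G) -> R) : (forall e, ~~ inGl G lam e -> a e = 0) ->
  edge_coef (\row_j a (El_edge j)) =1 a.
Proof.
move=> a_Gl e; case: (boolP (inGl G lam e)) => [Gl_e|eNGl]; last first.
  by rewrite edge_coef_notin // a_Gl.
have e_El : e \in El G lam by rewrite inE.
by rewrite -(enum_rankK_in e_El e_El) edge_coef_El mxE.
Qed.

Lemma edge_coef_lin a r s e :
  edge_coef (a *: r + s) e = a * edge_coef r e + edge_coef s e.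
Proof.
by rewrite /edge_coef mulr_sumr -big_split; apply: eq_bigr => j _; rewrite !mxE.
Qed.

Lemma sum_edge_coef r (P : pred 'I_(nE G)) (F : 'I_(nE G) -> R) :
  \sum_(e | P e) edge_coef r e * F e = \sum_(j | P (El_edge j)) r 0 j * F (El_edge j).
Proof.
rewrite (partition_big El_edge P) //; apply: eq_bigr => e Pe.
rewrite /edge_coef mulr_suml; apply: eq_big => [j|j /eqP -> //].
by case: eqP => [->|_]; rewrite ?Pe ?andbF.
Qed.

Lemma kirchhoff_mxE r v : (r *m kirchhoff_mx) 0 v = kirchhoff (edge_coef r) v.
Proof.
change ((r *m kirchhoff_mx) 0 v = \sum_(e | tgt G e == v) edge_coef r e * edge_cos e -
            \sum_(e | src G e == v) edge_coef r e).
have -> : \sum_(e | src G e == v) edge_coef r e = \sum_(e | src G e == v) edge_coef r e * 1.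
  by apply: eq_bigr => e _; rewrite mulr1.
rewrite !sum_edge_coef mxE.
under eq_bigr do rewrite mxE mulrBr.
rewrite sumrB !(big_mkcond (fun j => _ == v)) /=.
by congr (_ - _); apply: eq_bigr => j _;
  case: eqP => _ /=; rewrite ?mul1r ?mulr1 ?mul0r ?mulr0.
Qed.

Lemma kermx_tr_signed (y : 'rV[R]_(nV G)) :
  (y <= kermx kirchhoff_mx^T)%MS <-> signed_potential lam (fun v => y 0 v).
Proof.
have delta (F : 'I_(nV G) -> R) t : \sum_v F v * (t == v)%:R = F t.
  rewrite (bigD1 t) //= eqxx mulr1 big1 ?addr0 // => v.
  by rewrite eq_sym => /negbTE ->; rewrite mulr0.
have yA j : (y *m kirchhoff_mx^T) 0 j =
    y 0 (tgt G (El_edge j)) * sgn (halfwaves (El_edge j)) - y 0 (src G (El_edge j)).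
  rewrite mxE -(proj2 (inGl_sin_cos (El_edgeP j))).
  by under eq_bigr do rewrite !mxE mulrBr mulrA mulrAC; rewrite sumrB !delta.
rewrite sub_kermx; split => [/eqP yA0 e Gl_e | y_pot].
  have e_El : e \in El G lam by rewrite inE.
  move/rowP/(_ (enum_rank_in e_El e)): yA0; rewrite yA mxE /El_edge enum_rankK_in //.
  by move/eqP; rewrite subr_eq0 mulrC => /eqP <-.
apply/eqP/rowP => j; rewrite yA mxE (y_pot _ (El_edgeP j)).
by rewrite mulrC subrr.
Qed.

Lemma rank_kermx_tr : \rank (kermx kirchhoff_mx^T) = #|free_roots G lam|.
Proof.
pose h (i : 'I_#|free_roots G lam|) : 'I_(nV G) := enum_val i.
have h_free i : h i \in free_roots G lam by apply: enum_valP.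
apply: (@mxrank_pivots _ _ _ _ h (\matrix_(i, v) root_potential lam (h i) v)).
- apply/row_subP => i; apply/kermx_tr_signed => e Gl_e; rewrite !mxE.
  exact: root_potential_signed (free_roots_balanced (h_free i)) e Gl_e.
- move=> i j; rewrite mxE (root_potential_free (h_free i) (h_free j)).
  by rewrite (inj_eq enum_val_inj) eq_sym; case: eqP.
- move=> y /kermx_tr_signed y_pot y_h; apply/rowP => v; rewrite mxE.
  apply: (signed_potential_free_eq0 lam_gt0 y_pot) => r r_free.
  by have := y_h (enum_rank_in r_free r); rewrite /h enum_rankK_in.
Qed.

Lemma rank_kermx :
  \rank (kermx kirchhoff_mx) = (beta1 G lam - beta0odd G lam)%N /\
  (beta0odd G lam <= beta1 G lam)%N.
Proof.
have [free_card odd_le Vl_le] := card_free_roots G lam.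
have := rank_kermx_tr; rewrite mxrank_ker mxrank_tr free_card.
have := rank_leq_row kirchhoff_mx; have := rank_leq_col kirchhoff_mx.
have : (#|Vl G lam| <= nV G)%N by rewrite -[X in (_ <= X)%N](card_ord (nV G)) max_card.
rewrite mxrank_ker /beta1; lia.
Qed.

Lemma Rspace_dim : has_dim G (Rspace G lam) (\rank (kermx kirchhoff_mx)).
Proof.
have om_neq0 : om != 0%R by apply/eqP/Rgt_not_eq.
apply: (@has_dim_row_space _ _ _ _ _ (fun r e x => edge_coef r e / om * sin (om * x))%R).
- by move=> a r s e x /=; rewrite edge_coef_lin !mulrDl !mulrA.
- move=> r r0; apply/rowP => j; rewrite mxE -edge_coef_El.
  have [x ex sin_x] := exists_sin_neq0 om_gt0 (len_pos (El_edge j)).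
  move/eqP: (r0 _ _ ex); rewrite !mulf_eq0 invr_eq0 (negbTE om_neq0) orbF.
  by case/orP => /eqP // sin0; case: sin_x.
- move=> r /sub_kermxP rA; apply: coef_Rspace => [e|v]; first exact: edge_coef_notin.
  by rewrite -kirchhoff_mxE rA mxE.
- move=> f /Rspace_coef [a [fa a_Gl a_kir]].
  exists (\row_j a (El_edge j)) => [|e x ex]; last by rewrite fa // edge_coef_row.
  apply/sub_kermxP/rowP => v; rewrite kirchhoff_mxE mxE.
  transitivity (kirchhoff a v); last exact: a_kir.
  by rewrite /kirchhoff; congr (_ - _); apply: eq_bigr => e _; rewrite edge_coef_row.
Qed.

End KirchhoffMatrix.
End KirchhoffSystem.

Theorem theorem3p1 (G : mgraph) (lam : R) (hlam : Rlt 0 lam) :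
  (beta0odd G lam <= beta1 G lam)%N /\
  has_dim G (Rspace G lam) (beta1 G lam - beta0odd G lam) /\
  (is_resonance G lam <-> (beta1 G lam - beta0odd G lam)%N <> 0%N).
Proof.
have [rankE odd_le] := rank_kermx G hlam.
have dim_R := Rspace_dim G hlam; rewrite rankE in dim_R.
by split => //; split => //; apply: has_dim_neq0.
Qed.
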